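(* Consider any one of the following games on $n$ cups: the fixed $p$-processor cup game (for some fixed $p$) or the variable-processor cup game, each in either the non-negative-fill version or the negative-fill version. Then for every state $A$ and every game length $t\ge 0$, $\operatorname{GREEDY}(A,t)=\operatorname{OPT}(A,t)$.
   Context: A state is a multiset of $n$ real fills (states equal up to permutation are identified). In the variable-processor cup game, in each round the filler chooses an integer $1\le p\le n$ and reals $a_1,\dots,a_n\in[0,1]$ with $\sum_i a_i=p$ and adds $a_i$ to cup $i$; then the emptier chooses exactly $p$ distinct cups and removes $1$ unit from each: in the non-negative-fill version a chosen cup with fill $x$ becomes $\max(0,x-1)$, in the negative-fill version it becomes $x-1$. The fixed $p$-processor cup game is the same except that $p$ is the same fixed value in every round. The backlog of a state is its maximum fill. $\operatorname{OPT}(S,0)$ is the backlog of $S$, and for $t>0$, $\operatorname{OPT}(S,t)=\sup_{S'}\min_{S''}\operatorname{OPT}(S'',t-1)$, where $S'$ ranges over states reachable from $S$ by a filler move and $S''$ over states reachable from $S'$ by an emptier move. $\operatorname{GREEDY}(S,t)$ is the supremum backlog a filler can achieve at the end of a $t$-round game starting from $S$ when the emptier is greedy, i.e. always empties from the $p$ fullest cups after the filler's move. *)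

From HB Require Import structures.
From mathcomp Require Import all_boot all_order all_algebra.
From mathcomp Require Import all_classical all_reals ereal.
Set Implicit Arguments. Unset Strict Implicit. Unset Printing Implicit Defensive.
Import Order.TTheory GRing.Theory Num.Theory.
Local Open Scope ring_scope.
Local Open Scope classical_set_scope.

Variant fill_mode := NonNegFill | NegFill.

Variant proc_mode := FixedProc of nat | VariableProc.

(* A state on n cups: fill of each cup (cup labels are irrelevant: all
   quantities below are invariant under permutation of cups). *)
Definition state (R : realType) (n : nat) := 'I_n -> R.

Definition valid_p (pm : proc_mode) (n p : nat) : bool :=
  (1 <= p <= n)%N &&
  match pm with FixedProc p0 => p == p0 | VariableProc => true end.

Definition backlog (R : realType) (n : nat) (S : state R n) : \bar R :=
  \big[maxe/-oo%E]_(i < n) (S i)%:E.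

Definition filler_move (R : realType) (pm : proc_mode) (n : nat)
  (S : state R n) (p : nat) (S' : state R n) : Prop :=
  valid_p pm n p /\
  exists a : 'I_n -> R,
    (forall i, 0 <= a i <= 1) /\ \sum_(i < n) a i = p%:R /\
    (forall i, S' i = S i + a i).

Definition drop1 (R : realType) (fm : fill_mode) (x : R) : R :=
  match fm with NonNegFill => Num.max 0 (x - 1) | NegFill => x - 1 end.

Definition emptier_move (R : realType) (fm : fill_mode) (n : nat)
  (p : nat) (S' S'' : state R n) : Prop :=
  exists C : {set 'I_n}, #|C| = p /\
    (forall i, S'' i = if i \in C then drop1 fm (S' i) else S' i).

(* Greedy emptier: empties the p fullest cups (ties broken by cup index;
   the resulting multiset does not depend on the tie-breaking). *)
Definition greedy_move (R : realType) (fm : fill_mode) (n : nat)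
  (p : nat) (S' : state R n) : state R n :=
  fun i => if ltn #|[set j : 'I_n | (S' i < S' j) || ((S' j == S' i) && ltn j i)]| p
           then drop1 fm (S' i) else S' i.

Fixpoint OPT (R : realType) (pm : proc_mode) (fm : fill_mode) (n : nat)
  (S : state R n) (t : nat) {struct t} : \bar R :=
  match t with
  | 0 => backlog S
  | t'.+1 =>
      ereal_sup [set v | exists p (S' : state R n), filler_move pm S p S' /\
        v = ereal_inf [set w | exists S'' : state R n,
                          emptier_move fm p S' S'' /\ w = OPT pm fm S'' t']]
  end.

Fixpoint GREEDY (R : realType) (pm : proc_mode) (fm : fill_mode) (n : nat)
  (S : state R n) (t : nat) {struct t} : \bar R :=
  match t with
  | 0 => backlog S
  | t'.+1 =>
      ereal_sup [set v | exists p (S' : state R n), filler_move pm S p S' /\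
        v = GREEDY pm fm (greedy_move fm p S') t']
  end.

From Pilot Require Import Defs.
From HB Require Import structures.
From mathcomp Require Import all_boot all_order all_algebra.
From mathcomp Require Import all_classical all_reals ereal.
From mathcomp Require Import fingroup perm lra.
Set Implicit Arguments. Unset Strict Implicit. Unset Printing Implicit Defensive.
Import Order.TTheory GRing.Theory Num.Theory.
Local Open Scope ring_scope.

(* Say that [y] dominates [x] when [y] is reachable from [x] by permuting the
   cups, raising a cup, or moving one unit from a cup [u] to a cup [w] with
   [x_u - 1 <= x_w] (which only spreads the two fills apart).  The backlog is
   monotone for domination, every filler move from [x] is matched by one from
   [y] landing in a dominating state, and the greedy emptying preserves
   domination; hence [GREEDY _ t] is monotone.  Moreover emptying the [p]
   fullest cups leaves a state dominated by every other emptying, so in [OPT]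
   the infimum over emptier moves is attained by the greedy move, and
   induction on [t] gives [GREEDY = OPT]. *)

Section Drop1.
Variable R : realType.
Implicit Types (x y : R).

Definition drops_unit fm x : Prop := if fm is NonNegFill then 1 <= x else True.

Lemma le_drop1 fm x y : x <= y -> Defs.drop1 fm x <= Defs.drop1 fm y.
Proof. by case: fm => /= le_xy; [rewrite le_max2 ?lerB|rewrite lerB]. Qed.

Lemma drop1_unit fm x : drops_unit fm x -> Defs.drop1 fm x = x - 1.
Proof. by case: fm => //= ge1_x; apply/max_idPr; rewrite subr_ge0. Qed.

Lemma drops_unit_le fm x y : drops_unit fm x -> x <= y -> drops_unit fm y.
Proof. by case: fm => //= ge1_x /(le_trans ge1_x). Qed.

Lemma drop1_lt1 x : x < 1 -> Defs.drop1 NonNegFill x = 0.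
Proof. by move=> lt1_x /=; apply/max_idPl; rewrite subr_le0 ltW. Qed.

End Drop1.

Section TopCups.
Variables (R : realType) (n : nat).
Implicit Types (x y : state R n) (C P : {set 'I_n}).

Definition empty_cups fm C x : state R n :=
  fun i => if i \in C then Defs.drop1 fm (x i) else x i.

Definition top_cups C x : Prop := forall i j, i \in C -> j \notin C -> x j <= x i.

Definition fuller_cups x i : {set 'I_n} :=
  [set j | (x i < x j) || ((x j == x i) && (j < i)%N)].

Definition greedy_cups p x : {set 'I_n} := [set i | #|fuller_cups x i| < p]%N.

Lemma greedy_moveE fm p x : greedy_move fm p x = empty_cups fm (greedy_cups p x) x.
Proof.
apply: funext => i; rewrite /greedy_move /empty_cups [i \in _]inE.
by rewrite (@eq_card _ _ (fuller_cups x i)) // => j; rewrite !inE; exact: asboolb.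
Qed.

Lemma fuller_cups_proper x i j :
  j \in fuller_cups x i -> fuller_cups x j \proper fuller_cups x i.
Proof.
move=> ji; apply/properP; split; last by exists j; rewrite // !inE ltxx eqxx ltnn.
apply/fintype.subsetP => k; move: ji; rewrite !inE.
case/orP=> [lt_ij|/andP[/eqP eq_ji lt_ji]] /orP[lt_jk|/andP[/eqP eq_kj lt_kj]].
- by rewrite (lt_trans lt_ij lt_jk).
- by rewrite eq_kj lt_ij.
- by rewrite -eq_ji lt_jk.
- by rewrite eq_kj eq_ji eqxx (ltn_trans lt_kj lt_ji) orbT.
Qed.

Lemma fuller_cups_total x i j :
  i != j -> (j \in fuller_cups x i) || (i \in fuller_cups x j).
Proof.
move=> neq_ij; rewrite !inE; case: (ltgtP (x i) (x j)) => //= _.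
by case: (ltngtP i j) => // /val_inj eq_ij; rewrite eq_ij eqxx in neq_ij.
Qed.

Lemma card_fuller_cups_lt x i : (#|fuller_cups x i| < n)%N.
Proof.
rewrite -[n in (_ < n)%N]card_ord; apply: proper_card; apply/properP.
by split; [apply: subset_predT | exists i; rewrite // !inE ltxx eqxx ltnn].
Qed.

Lemma card_ord_lt p : (p <= n)%N -> #|[set k : 'I_n | (k < p)%N]| = p.
Proof.
move=> le_pn; have widen_inj : injective (widen_ord le_pn).
  by move=> j k /(congr1 val) /= /val_inj.
rewrite -[RHS]card_ord -(card_imset _ widen_inj); apply: eq_card => k; rewrite inE.
apply/idP/imsetP => [lt_kp|[j _ ->]]; last exact: (ltn_ord j).
by exists (Ordinal lt_kp); last apply: val_inj.
Qed.

Lemma card_greedy_cups p x : (p <= n)%N -> #|greedy_cups p x| = p.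
Proof.
move=> le_pn; pose rank i := Ordinal (card_fuller_cups_lt x i).
have rank_inj : injective rank.
  move=> i j /(congr1 val) /= eq_card; apply/eqP/negPn/negP => /(fuller_cups_total x).
  by case/orP=> /fuller_cups_proper /proper_card; rewrite eq_card ltnn.
have -> : greedy_cups p x = rank @^-1: [set k : 'I_n | (k < p)%N].
  by apply/setP => i; rewrite !inE.
by rewrite card_preimset // card_ord_lt.
Qed.

Lemma top_greedy_cups p x : top_cups (greedy_cups p x) x.
Proof.
move=> i j; rewrite !inE -leqNgt => lt_ip le_pj; rewrite leNgt; apply/negP => lt_ij.
have /fuller_cups_proper/proper_card lt_ji : j \in fuller_cups x i by rewrite inE lt_ij.
by have := leq_trans (ltn_trans lt_ji lt_ip) le_pj; rewrite ltnn.
Qed.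

Lemma notin_neq C b c : c \in C -> b \notin C -> b != c.
Proof. by move=> cC; apply: contraNneq => ->. Qed.

Lemma in_neq C a b : b \notin C -> a \in C -> a != b.
Proof. by move=> bC; apply: contraTneq => ->. Qed.

Lemma card_exchange C i m : i \notin C -> m \in C -> #|i |: (C :\ m)| = #|C|.
Proof. by move=> iC mC; rewrite cardsU1 !inE (negbTE iC) andbF (cardsD1 m C) mC. Qed.

Lemma top_cups_exchange y P i m :
  (forall a b, a \in P -> a != m -> b \notin P -> b != i -> y b <= y a) ->
  (forall b, b \notin P -> b != i -> y b <= y i) ->
  (forall a, a \in P -> a != m -> y m <= y a) ->
  y m <= y i -> top_cups (i |: (P :\ m)) y.
Proof.
move=> top_rest top_i top_m le_mi a b; rewrite !inE negb_or negb_and negbK.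
case/orP=> [/eqP->|/andP[am aP]] /andP[bi /orP[/eqP->|bP]]; by auto.
Qed.

End TopCups.

Section Dominated.
Variables (R : realType) (fm : fill_mode) (n : nat).
Implicit Types (x y z : state R n) (C D P Q : {set 'I_n}).

Definition transfer x u w : state R n :=
  fun k => if k == u then x u - 1 else if k == w then x w + 1 else x k.

Lemma transfer_src x u w : transfer x u w u = x u - 1.
Proof. by rewrite /transfer eqxx. Qed.

Lemma transfer_dst x u w : u != w -> transfer x u w w = x w + 1.
Proof. by rewrite /transfer eqxx eq_sym => /negbTE->. Qed.

Lemma transfer_other x u w k : k != u -> k != w -> transfer x u w k = x k.
Proof. by rewrite /transfer => /negbTE-> /negbTE->. Qed.

Lemma sum_transfer x u w : u != w -> \sum_i transfer x u w i = \sum_i x i.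
Proof.
move=> neq_uw; have neq_wu : w != u by rewrite eq_sym.
have split_uw (F : 'I_n -> R) :
    \sum_i F i = F u + F w + \sum_(i | (i != u) && (i != w)) F i.
  by rewrite (bigD1 u) // (bigD1 w) //= addrA.
rewrite !split_uw transfer_src transfer_dst // (eq_bigr x) => [|k /andP[]].
  by rewrite addrACA addNr addr0.
exact: transfer_other.
Qed.

(* In the non-negative-fill game [drops_unit] keeps the source of a transfer
   non-negative. *)
Inductive dominated : state R n -> state R n -> Prop :=
| dominated_refl x : dominated x x
| dominated_trans x y z : dominated x y -> dominated y z -> dominated x z
| dominated_perm x (s : {perm 'I_n}) : dominated x (x \o s)
| dominated_raise x y i :
    x i <= y i -> (forall k, k != i -> y k = x k) -> dominated x y
| dominated_transfer x u w :
    u != w -> x u - 1 <= x w -> drops_unit fm (x u) -> dominated x (transfer x u w).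

Lemma dominated_le x y : (forall i, x i <= y i) -> dominated x y.
Proof.
move=> le_xy; pose mix k : state R n := fun i => if (i < k)%N then y i else x i.
have mixS k : dominated (mix k) (mix k.+1).
  case: (ltnP k n) => [lt_kn|le_nk].
    apply: (@dominated_raise _ _ (Ordinal lt_kn)); first by rewrite /mix ltnn ltnSn.
    move=> j neq_jk; rewrite /mix ltnS leq_eqVlt (_ : (j == k :> nat) = false) //.
    exact: negbTE neq_jk.
  have -> : mix k.+1 = mix k.
    by apply: funext => i; rewrite /mix !(leq_trans (ltn_ord i)) // (leq_trans le_nk).
  exact: dominated_refl.
have mix_from0 k : dominated (mix 0) (mix k).
  by elim: k => [|k IHk]; [exact: dominated_refl | exact: dominated_trans IHk (mixS k)].
have -> : x = mix 0 by apply: funext => i; rewrite /mix ltn0.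
have -> : y = mix n by apply: funext => i; rewrite /mix ltn_ord.
exact: mix_from0.
Qed.

Lemma dominated_transfer_le x y u w :
  u != w -> x u - 1 <= x w -> drops_unit fm (x u) ->
  x u - 1 <= y u -> x w + 1 <= y w -> (forall k, k != u -> k != w -> x k <= y k) ->
  dominated x y.
Proof.
move=> neq_uw le_uw unit_u le_u le_w le_k.
apply: dominated_trans (dominated_transfer neq_uw le_uw unit_u) (dominated_le _) => k.
rewrite /transfer; case: (eqVneq k u) => [->//|neq_ku].
by case: (eqVneq k w) => [->//|neq_kw]; apply: le_k.
Qed.

Lemma dominated_perm_le x y (s : {perm 'I_n}) :
  (forall i, x (s i) <= y i) -> dominated x y.
Proof. by move=> le_xy; apply: dominated_trans (dominated_perm x s) (dominated_le _). Qed.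

(* [x] and [y] differ in which of two cups, with fills [a <= b], lost a unit. *)
Lemma dominated_drop_fuller x y u w a b :
  u != w -> a <= b -> x u = a -> x w = Defs.drop1 fm b ->
  Defs.drop1 fm a <= y u -> b <= y w -> (forall k, k != u -> k != w -> x k <= y k) ->
  dominated x y.
Proof.
move=> neq_uw le_ab xu xw le_u le_w le_k.
have neq_wu : w != u by rewrite eq_sym.
have unit_or_lt1 : drops_unit fm a \/ fm = NonNegFill /\ a < 1.
  by case: fm => /=; [case: (lerP 1 a); [left|right] | left].
case: unit_or_lt1 => [unit_a|[fmE lt1_a]].
  have unit_b : drops_unit fm b := drops_unit_le unit_a le_ab.
  move: le_u; rewrite drop1_unit // => le_u.
  by apply: (dominated_transfer_le neq_uw); rewrite ?xu ?xw ?drop1_unit //; lra.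
(* A drop now empties cup [u]: raise [x u] to [1] first, or swap the two cups
   when [b < 1] as well. *)
move: le_u xw; rewrite fmE drop1_lt1 // => ge0_yu xw.
have [ge1_b|lt1_b] := lerP 1 b.
  pose x1 k := if k == u then 1 else x k.
  apply: (dominated_trans (y := x1)).
    by apply: dominated_le => k; rewrite /x1; case: eqP => [->|]; rewrite ?xu; lra.
  have x1u : x1 u = 1 by rewrite /x1 eqxx.
  have x1w : x1 w = b - 1 by rewrite /x1 (negbTE neq_wu) xw drop1_unit.
  apply: (dominated_transfer_le neq_uw); rewrite ?x1u ?x1w ?fmE //=; try lra.
  by move=> k neq_ku neq_kw; rewrite /x1 (negbTE neq_ku) le_k.
apply: (dominated_perm_le (s := tperm u w)) => k.
case: (eqVneq k u) => [->|neq_ku]; first by rewrite tpermL xw drop1_lt1.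
case: (eqVneq k w) => [->|neq_kw]; first by rewrite tpermR xu; lra.
by rewrite tpermD 1?eq_sym // le_k.
Qed.

Lemma dominated_cover x y : dominated x y -> forall i, exists j, x i <= y j.
Proof.
elim=> {x y} [x i | x y z _ cover_xy _ cover_yz i | x s i | x y i le_i eq_k k |
              x u w neq_uw le_uw _ k]; first by exists i.
- have [j le_ij] := cover_xy i; have [k le_jk] := cover_yz j.
  by exists k; apply: le_trans le_jk.
- by exists ((s^-1)%g i); rewrite /= permKV.
- by exists k; case: (eqVneq k i) => [->//|neq_ki]; rewrite eq_k.
- case: (eqVneq k u) => [->|neq_ku]; first by exists w; rewrite transfer_dst //; lra.
  case: (eqVneq k w) => [->|neq_kw]; first by exists w; rewrite transfer_dst //; lra.
  by exists k; rewrite transfer_other.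
Qed.

Lemma le_backlog x y : (forall i, exists j, x i <= y j) -> (backlog x <= backlog y)%E.
Proof.
move=> cover; apply: bigmax_le => [|i _]; first exact: leNye.
by have [j le_ij] := cover i; apply: le_trans (le_bigmax _ _ j); rewrite lee_fin.
Qed.

Lemma backlog_dominated x y : dominated x y -> (backlog x <= backlog y)%E.
Proof. by move/dominated_cover/le_backlog. Qed.

Lemma dominated_empty_top x C D :
  top_cups D x -> #|C| = #|D| -> dominated (empty_cups fm D x) (empty_cups fm C x).
Proof.
move=> topD; move def_k: #|C :\: D| => k.
elim: k C def_k => [|k IHk] C def_k card_C.
  have subCD : C \subset D by rewrite -finset.setD_eq0 -cards_eq0 def_k.
  have -> : C = D by apply/eqP; rewrite eqEcard subCD card_C leqnn.
  exact: dominated_refl.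
have /finset.set0Pn [c cCD] : C :\: D != finset.set0 by rewrite -cards_eq0 def_k.
have card_DC : #|D :\: C| = k.+1.
  by rewrite cardsD finset.setIC -card_C -cardsD def_k.
have /finset.set0Pn [d dDC] : D :\: C != finset.set0 by rewrite -cards_eq0 card_DC.
move: (cCD) (dDC); rewrite !inE => /andP[cD cC] /andP[dC dD].
have neq_cd := notin_neq dD cD.
apply: (dominated_trans (IHk (d |: (C :\ c)) _ _)).
- have -> : (d |: (C :\ c)) :\: D = (C :\: D) :\ c.
    apply/setP => j; rewrite !inE.
    case: (eqVneq j d) => [->|_] /=; first by rewrite dD andbF.
    by case: (j == c); case: (j \in D); case: (j \in C).
  by move: def_k; rewrite (cardsD1 c (C :\: D)) cCD => -[].
- by rewrite card_exchange // !inE.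
apply: (dominated_drop_fuller neq_cd (topD _ _ dD cD)); rewrite /empty_cups ?inE.
- by rewrite (negbTE neq_cd) eqxx.
- by rewrite eqxx.
- by rewrite cC.
- by rewrite (negbTE dC).
by move=> j neq_jc neq_jd; rewrite !inE (negbTE neq_jc) (negbTE neq_jd).
Qed.

Definition top_emptying_above x y P := exists Q,
  [/\ top_cups Q y, #|Q| = #|P| & dominated (empty_cups fm P x) (empty_cups fm Q y)].

Definition top_emptying_dominated x y :=
  forall P, top_cups P x -> top_emptying_above x y P.

Lemma top_emptying_keep x y P :
  (forall k, x k <= y k) -> top_cups P y -> top_emptying_above x y P.
Proof.
move=> le_xy topPy; exists P; split => //; apply: dominated_le => k.
by rewrite /empty_cups; case: ifP => _; rewrite ?le_drop1.
Qed.

Lemma top_emptying_perm x (s : {perm 'I_n}) : top_emptying_dominated x (x \o s).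
Proof.
move=> P topP; exists (s @^-1: P); split.
- by move=> i j; rewrite !inE; apply: topP.
- exact/card_preimset/perm_inj.
by apply: (dominated_perm_le (s := s)) => i; rewrite /empty_cups inE.
Qed.

Lemma top_emptying_raise x y i :
  x i <= y i -> (forall k, k != i -> y k = x k) -> top_emptying_dominated x y.
Proof.
move=> le_i eq_k P topP.
have le_xy k : x k <= y k by case: (eqVneq k i) => [->//|/eq_k->].
case: (boolP (i \in P)) => iP.
  apply: top_emptying_keep => // a b aP bP.
  by rewrite (eq_k b (notin_neq iP bP)) (le_trans (topP _ _ aP bP)).
have [->|[m0 m0P]] := set_0Vmem P.
  by apply: top_emptying_keep => // a b; rewrite inE.
have [m mP min_m] := arg_minP x m0P; have {}mP : m \in P := mP.
have [lt_mi|le_im] := ltP (x m) (y i); last first.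
  apply: top_emptying_keep => // a b aP bP; rewrite (eq_k a (in_neq iP aP)).
  case: (eqVneq b i) => [->|/eq_k->]; last exact: topP.
  exact: le_trans le_im (min_m _ aP).
have neq_mi := in_neq iP mP.
exists (i |: (P :\ m)); split; first apply: top_cups_exchange.
- by move=> a b aP _ bP /eq_k->; rewrite (eq_k a (in_neq iP aP)); apply: topP.
- by move=> b bP /eq_k->; apply: le_trans (topP _ _ mP bP) (ltW lt_mi).
- by move=> a aP _; rewrite !eq_k ?(in_neq iP) //; apply: min_m.
- by rewrite eq_k // ltW.
- exact: card_exchange.
have neq_im : i != m by rewrite eq_sym.
apply: (dominated_drop_fuller neq_im (topP _ _ mP iP)); rewrite /empty_cups ?inE.
- by rewrite (negbTE iP).
- by rewrite mP.
- by rewrite eqxx le_drop1.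
- by rewrite (negbTE neq_mi) eqxx /= eq_k.
move=> k neq_ki neq_km; rewrite !inE (negbTE neq_ki) neq_km.
by case: ifP; rewrite ?le_drop1.
Qed.

Section Transfer.
Variables (z : state R n) (u w : 'I_n).
Hypotheses (neq_uw : u != w) (le_uw : z u - 1 <= z w) (unit_u : drops_unit fm (z u)).

Let v := transfer z u w.
Let v_src : v u = z u - 1. Proof. exact: transfer_src. Qed.
Let v_dst : v w = z w + 1. Proof. exact: transfer_dst. Qed.
Let v_other k : k != u -> k != w -> v k = z k. Proof. exact: transfer_other. Qed.
Let drop1_src : Defs.drop1 fm (z u) = z u - 1. Proof. exact: drop1_unit. Qed.

Let drop1_dst : Defs.drop1 fm (v w) = z w.
Proof.
by rewrite v_dst drop1_unit ?addrK //; apply: drops_unit_le unit_u _; rewrite -lerBlDr.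
Qed.

Let le_v k : k != u -> z k <= v k.
Proof.
move=> neq_ku; case: (eqVneq k w) => [->|neq_kw]; last by rewrite v_other.
by rewrite v_dst lerDl.
Qed.

Let v_le k : k != w -> v k <= z k.
Proof.
move=> neq_kw; case: (eqVneq k u) => [->|neq_ku]; last by rewrite v_other.
by rewrite v_src lerBlDr lerDl.
Qed.

Lemma top_emptying_transfer_in_in P :
  top_cups P z -> u \in P -> w \in P -> top_emptying_above z v P.
Proof.
move=> topP uP wP.
have v_out b : b \notin P -> v b = z b.
  by move=> bP; rewrite v_other ?(notin_neq uP) ?(notin_neq wP).
suff keep : (forall j, j \notin P -> z j <= z u - 1) -> top_emptying_above z v P.
  have [PC0|[j0 j0P]] := set_0Vmem (~: P).
    by apply: keep => j; rewrite -finset.in_setC PC0 inE.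
  have [j jP max_j] := arg_maxP z j0P; have {}jP : j \notin P by rewrite -finset.in_setC.
  have {}max_j b : b \notin P -> z b <= z j.
    by move=> bP; apply: max_j; change (b \in ~: P); rewrite finset.in_setC.
  have [le_ju|lt_uj] := leP (z j) (z u - 1).
    by apply: keep => b /max_j/le_trans; apply.
  have neq_jw := notin_neq wP jP; have neq_wj : w != j by rewrite eq_sym.
  exists (j |: (P :\ u)); split; first apply: top_cups_exchange.
  - move=> a b aP neq_au bP _; rewrite v_out //.
    exact: le_trans (topP _ _ aP bP) (le_v neq_au).
  - by move=> b bP _; rewrite !v_out // max_j.
  - move=> a aP neq_au; rewrite v_src; apply: le_trans (ltW lt_uj) _.
    exact: le_trans (topP _ _ aP jP) (le_v neq_au).
  - by rewrite v_src v_out // ltW.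
  - exact: card_exchange.
  apply: (dominated_drop_fuller neq_jw (topP _ _ wP jP)); rewrite /empty_cups ?inE.
  - by rewrite (negbTE jP).
  - by rewrite wP.
  - by rewrite eqxx v_out.
  - by rewrite (negbTE neq_wj) eq_sym neq_uw wP drop1_dst.
  move=> k neq_kj neq_kw; rewrite !inE (negbTE neq_kj) /=.
  case: (eqVneq k u) => [->|neq_ku] /=; first by rewrite uP drop1_src v_src.
  by rewrite v_other.
move=> below_u; exists P; split => //.
  move=> a b aP bP; rewrite v_out //; case: (eqVneq a u) => [->|neq_au].
    by rewrite v_src below_u.
  exact: le_trans (topP _ _ aP bP) (le_v neq_au).
apply: (dominated_drop_fuller neq_uw le_uw); rewrite /empty_cups ?uP ?wP //.
- by rewrite v_src.
- by rewrite drop1_dst.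
by move=> k neq_ku neq_kw; rewrite v_other.
Qed.

Lemma top_emptying_transfer_in_out P :
  top_cups P z -> u \in P -> w \notin P -> top_emptying_above z v P.
Proof.
move=> topP uP wP; have neq_wu : w != u by rewrite eq_sym.
exists (w |: (P :\ u)); split; first apply: top_cups_exchange.
- move=> a b aP neq_au bP neq_bw; rewrite v_other ?(notin_neq uP) //.
  exact: le_trans (topP _ _ aP bP) (le_v neq_au).
- move=> b bP neq_bw; rewrite v_other ?(notin_neq uP) // v_dst.
  by apply: le_trans (topP _ _ uP bP) _; rewrite -lerBlDr.
- move=> a aP neq_au; rewrite v_src; apply: le_trans le_uw _.
  exact: le_trans (topP _ _ aP wP) (le_v neq_au).
- by rewrite v_src v_dst; apply: le_trans le_uw _; rewrite lerDl.
- exact: card_exchange.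
apply: dominated_le => k; rewrite /empty_cups !inE.
case: (eqVneq k u) => [->|neq_ku] /=; first by rewrite uP (negbTE neq_uw) drop1_src v_src.
case: (eqVneq k w) => [->|neq_kw] /=; first by rewrite (negbTE wP) drop1_dst.
by rewrite v_other.
Qed.

Lemma top_emptying_transfer_out_in P :
  top_cups P z -> u \notin P -> w \in P -> top_emptying_above z v P.
Proof.
move=> topP uP wP; exists P; split => //.
  move=> a b aP bP; apply: le_trans (v_le (notin_neq wP bP)) _.
  exact: le_trans (topP _ _ aP bP) (le_v (in_neq uP aP)).
apply: (dominated_drop_fuller neq_uw (topP _ _ wP uP)).
all: rewrite /empty_cups ?wP ?(negbTE uP) //.
- by rewrite v_src drop1_src.
- by rewrite drop1_dst.
by move=> k neq_ku neq_kw; rewrite v_other.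
Qed.

Lemma top_emptying_transfer_out_out P :
  top_cups P z -> u \notin P -> w \notin P -> top_emptying_above z v P.
Proof.
move=> topP uP wP.
have v_in a : a \in P -> v a = z a.
  by move=> aP; rewrite v_other ?(in_neq uP) ?(in_neq wP).
suff keep : (forall a, a \in P -> z w + 1 <= z a) -> top_emptying_above z v P.
  have [P0|[m0 m0P]] := set_0Vmem P; first by apply: keep => a; rewrite P0 inE.
  have [m mP min_m] := arg_minP z m0P; have {}mP : m \in P := mP.
  have [le_wm|lt_mw] := leP (z w + 1) (z m).
    by apply: keep => a aP; apply: le_trans le_wm (min_m _ aP).
  have neq_um := notin_neq mP uP; have neq_mw := in_neq wP mP.
  exists (w |: (P :\ m)); split; first apply: top_cups_exchange.
  - move=> a b aP _ bP neq_bw; rewrite (v_in a) //.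
    exact: le_trans (v_le neq_bw) (topP _ _ aP bP).
  - move=> b bP neq_bw; rewrite v_dst; apply: le_trans (v_le neq_bw) _.
    exact: le_trans (topP _ _ mP bP) (ltW lt_mw).
  - by move=> a aP _; rewrite !v_in //; apply: min_m.
  - by rewrite v_in // v_dst ltW.
  - exact: card_exchange.
  apply: (dominated_drop_fuller neq_um (topP _ _ mP uP)); rewrite /empty_cups ?inE.
  - by rewrite (negbTE uP).
  - by rewrite mP.
  - by rewrite (negbTE neq_uw) (negbTE uP) andbF v_src drop1_src.
  - by rewrite (negbTE neq_mw) eqxx v_in.
  move=> k neq_ku neq_km; rewrite !inE neq_km /=.
  case: (eqVneq k w) => [->|neq_kw] /=; first by rewrite (negbTE wP) drop1_dst.
  by rewrite v_other.
move=> above_w; exists P; split => //.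
  move=> a b aP bP; rewrite (v_in a) //.
  case: (eqVneq b w) => [->|neq_bw]; first by rewrite v_dst above_w.
  exact: le_trans (v_le neq_bw) (topP _ _ aP bP).
apply: (dominated_transfer_le neq_uw); rewrite /empty_cups ?(negbTE uP) ?(negbTE wP) //.
- by rewrite v_src.
- by rewrite v_dst.
by move=> k neq_ku neq_kw; rewrite v_other.
Qed.

Lemma top_emptying_transfer : top_emptying_dominated z v.
Proof.
move=> P topP; case: (boolP (u \in P)) => uP; case: (boolP (w \in P)) => wP.
- exact: top_emptying_transfer_in_in.
- exact: top_emptying_transfer_in_out.
- exact: top_emptying_transfer_out_in.
- exact: top_emptying_transfer_out_out.
Qed.

End Transfer.

Lemma dominated_top_emptying x y : dominated x y -> top_emptying_dominated x y.
Proof.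
elim=> {x y} [x | x y z _ IHxy _ IHyz | x s | x y i | x u w].
- by move=> P topP; apply: top_emptying_keep.
- move=> P /IHxy[Q [/IHyz[Q' [topQ' card_Q' domQ']] card_Q domQ]].
  by exists Q'; split; [|rewrite card_Q'|apply: dominated_trans domQ domQ'].
- exact: top_emptying_perm.
- exact: top_emptying_raise.
- exact: top_emptying_transfer.
Qed.

Lemma dominated_greedy_move p x y : (p <= n)%N ->
  dominated x y -> dominated (greedy_move fm p x) (greedy_move fm p y).
Proof.
move=> le_pn /dominated_top_emptying/(_ _ (top_greedy_cups (p := p) (x := x))).
case=> Q [topQ card_Q domQ].
rewrite !greedy_moveE; apply: dominated_trans domQ (dominated_empty_top _ _) => //.
by rewrite card_Q !card_greedy_cups.
Qed.

Lemma ereal_inf_emptier_move (f : state R n -> \bar R) p x : (p <= n)%N ->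
  {homo f : y z / dominated y z >-> (y <= z)%E} ->
  ereal_inf [set v | exists y, emptier_move fm p x y /\ v = f y] = f (greedy_move fm p x).
Proof.
move=> le_pn homo_f; apply/eqP; rewrite eq_le; apply/andP; split.
  apply: ereal_inf_lbound; exists (greedy_move fm p x); split => //.
  exists (greedy_cups p x); rewrite card_greedy_cups //; split => // i.
  by rewrite greedy_moveE.
apply: le_ereal_inf_tmp => _ [y [[C [card_C yE]] ->]]; apply: homo_f.
have -> : y = empty_cups fm C x by apply: funext.
rewrite greedy_moveE; apply: dominated_empty_top; first exact: top_greedy_cups.
by rewrite card_C card_greedy_cups.
Qed.

End Dominated.

Section Filler.
Variables (R : realType) (pm : proc_mode) (fm : fill_mode) (n : nat).
Implicit Types (x y : state R n).

Lemma filler_moveE x p y : filler_move pm x p y <->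
  [/\ valid_p pm n p, forall i, 0 <= y i - x i <= 1 & \sum_i (y i - x i) = p%:R].
Proof.
split=> [[valid_pn [a [a01 [sum_a yE]]]]|[valid_pn d01 sum_d]].
  have aE i : y i - x i = a i by rewrite yE addrAC subrr add0r.
  by split=> // [i|]; rewrite ?aE // (eq_bigr a).
by split=> //; exists (fun i => y i - x i); split=> //; split=> // i; rewrite addrC subrK.
Qed.

Lemma filler_move_le x p y : filler_move pm x p y -> (p <= n)%N.
Proof. by case=> /andP[/andP[]]. Qed.

Lemma dominated_filler_transfer x u w p y :
  u != w -> x u - 1 <= x w -> drops_unit fm (x u) -> filler_move pm x p y ->
  exists2 y', filler_move pm (transfer x u w) p y' & dominated fm y y'.
Proof.
move=> neq_uw le_uw unit_u /filler_moveE[valid_pn d01 sum_d].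
have /andP[du0 du1] := d01 u; have /andP[dw0 dw1] := d01 w.
have [le_yuw|lt_ywu] := lerP (y u - 1) (y w).
  exists (transfer y u w); last first.
    by apply: dominated_transfer => //; apply: drops_unit_le unit_u _; lra.
  have dE i : transfer y u w i - transfer x u w i = y i - x i.
    case: (eqVneq i u) => [->|neq_iu]; first by rewrite !transfer_src; lra.
    case: (eqVneq i w) => [->|neq_iw]; first by rewrite !transfer_dst //; lra.
    by rewrite !transfer_other.
  by apply/filler_moveE; split=> // [i|]; rewrite ?dE // (eq_bigr _ (fun i _ => dE i)).
exists (y \o tperm u w); last exact: dominated_perm.
apply/filler_moveE; split=> // [i|].
  case: (eqVneq i u) => [->|neq_iu].
    by rewrite /= tpermL transfer_src; apply/andP; lra.
  case: (eqVneq i w) => [->|neq_iw].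
    by rewrite /= tpermR transfer_dst //; apply/andP; lra.
  by rewrite /= tpermD 1?eq_sym // transfer_other.
rewrite sumrB sum_transfer // -sum_d sumrB; congr (_ - _).
exact/esym/reindex_inj/perm_inj.
Qed.

Lemma dominated_filler_move x y p x' : dominated fm x y -> filler_move pm x p x' ->
  exists2 y', filler_move pm y p y' & dominated fm x' y'.
Proof.
move=> dom_xy; elim: dom_xy x' => {x y} [x | x y z _ IHxy _ IHyz | x s | x y i le_i eq_k |
                                       x u w neq_uw le_uw unit_u] x' fill_x'.
- by exists x'; last exact: dominated_refl.
- have [y' /IHyz[z' fill_z' dom_yz] dom_xy] := IHxy _ fill_x'.
  by exists z'; last exact: dominated_trans dom_xy dom_yz.
- move: fill_x' => /filler_moveE[valid_pn d01 sum_d].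
  exists (x' \o s); last exact: dominated_perm.
  apply/filler_moveE; split=> // [i|]; first exact: d01.
  by rewrite -sum_d [RHS](reindex_inj (@perm_inj _ s)).
- move: fill_x' => /filler_moveE[valid_pn d01 sum_d].
  have dE k : y k + (x' k - x k) - y k = x' k - x k by rewrite addrAC subrr add0r.
  exists (fun k => y k + (x' k - x k)).
    by apply/filler_moveE; split=> // [k|]; rewrite ?dE // (eq_bigr _ (fun k _ => dE k)).
  apply: (@dominated_raise _ fm _ _ _ i) => [|k neq_ki]; first lra.
  by rewrite eq_k // addrC subrK.
- exact: dominated_filler_transfer.
Qed.

Lemma GREEDY_dominated x y t :
  dominated fm x y -> (GREEDY pm fm x t <= GREEDY pm fm y t)%E.
Proof.
elim: t x y => [|t IHt] x y dom_xy /=; first exact: backlog_dominated dom_xy.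
apply: ge_ereal_sup => _ [p [x' [fill_x' ->]]].
have [y' fill_y' dom_x'y'] := dominated_filler_move dom_xy fill_x'.
apply: le_trans (IHt _ _ (dominated_greedy_move (filler_move_le fill_x') dom_x'y')) _.
by apply: ereal_sup_ubound; exists p, y'.
Qed.

End Filler.

Theorem theorem4p4 (R : realType) (pm : proc_mode) (fm : fill_mode)
  (n : nat) (A : state R n) (t : nat) :
  GREEDY pm fm A t = OPT pm fm A t.
Proof.
elim: t A => [//|t IHt] A /=; congr ereal_sup.
have OPT_dominated (x y : state R n) :
    dominated fm x y -> (OPT pm fm x t <= OPT pm fm y t)%E.
  by rewrite -!IHt; apply: GREEDY_dominated.
apply/seteqP; split=> _ [p [S' [fill_S' ->]]]; exists p, S'; split=> //;
  by rewrite (ereal_inf_emptier_move _ (filler_move_le fill_S') OPT_dominated) IHt.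
Qed.
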